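(* Let $k\ge2$, $d\ge1$, and let $\lambda$ be a partition of $k$. Then $f_\lambda(X_1,\dots,X_{k-1})$ is positive semidefinite whenever $X_1,\dots,X_{k-1}$ are positive semidefinite complex $d\times d$ matrices.
   Context: $S_k$ acts on $(\mathbb{C}^d)^{\otimes k}$ via $T(\pi)\,|v_1\rangle\otimes\cdots\otimes|v_k\rangle=|v_{\pi^{-1}(1)}\rangle\otimes\cdots\otimes|v_{\pi^{-1}(k)}\rangle$. For a partition $\lambda$ of $k$ with irreducible character $\chi_\lambda$ of $S_k$, the central Young projector is $P_\lambda=\frac{\chi_\lambda(e)}{k!}\sum_{\pi\in S_k}\chi_\lambda(\pi^{-1})T(\pi)$ ($e$ the identity permutation). The polarized Cayley–Hamilton map $f_\lambda$ on $(k-1)$-tuples of complex $d\times d$ matrices is $f_\lambda(X_1,\dots,X_{k-1})=\operatorname{tr}_{1\dots k\setminus k}[P_\lambda(X_1\otimes\cdots\otimes X_{k-1}\otimes\mathbb{1})]$, where the partial trace is over the first $k-1$ tensor factors. *)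

(* Complex numbers: C := R[i] (mathcomp-real-closed) for an
   arbitrary R : realType (so C is the field of complex numbers). *)
From HB Require Import structures.
From mathcomp Require Import all_boot all_order all_algebra all_fingroup.
From mathcomp Require Import mxrepresentation spectral.
From mathcomp Require Import complex.
From mathcomp Require Import reals.

Set Implicit Arguments.
Unset Strict Implicit.
Unset Printing Implicit Defensive.

Import Order.TTheory GRing.Theory Num.Theory.
Local Open Scope ring_scope.

Section Defs.
Variable C : numClosedFieldType.

Definition psdmx (n : nat) (A : 'M[C]_n) : Prop :=
  map_mx Num.conj A^T = A /\
  forall v : 'rV[C]_n, 0 <= (v *m A *m (map_mx Num.conj v^T)) 0 0.

Definition is_irr_char (k : nat) (chi : 'S_k -> C) : Prop :=
  exists n (rG : mx_representation C [set: 'S_k]%G n),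
    mx_irreducible rG /\ forall p : 'S_k, chi p = \tr (rG p).

Variables k d : nat.

(* Basis of (C^d)^{\otimes k}: |e_{i 0}> (x) ... (x) |e_{i (k-1)}>,
   indexed by i : 'I_k -> 'I_d.  Operators are given by their matrix entries
   <e_i| A |e_j>, as functions idx -> idx -> C. *)
Definition idx := {ffun 'I_k -> 'I_d}.

(* T(pi) |v_1 .. v_k> = |v_{pi^-1 1} .. v_{pi^-1 k}> ; on basis vectors
   T(pi)|e_j> = |e_i> with i m = j (pi^-1 m). *)
Definition Tperm (p : 'S_k) (i j : idx) : C :=
  ([forall m : 'I_k, i m == j ((p^-1)%g m)] : bool)%:R.

Definition Pyoung (chi : 'S_k -> C) (i j : idx) : C :=
  chi 1%g / (k`!)%:R * \sum_(p : 'S_k) chi (p^-1)%g * Tperm p i j.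

(* X_1 (x) ... (x) X_{k-1} (x) 1, with X_{m+1} = nth 0 X m. *)
Definition tensX (X : seq 'M[C]_d) (i j : idx) : C :=
  \prod_(m : 'I_k)
     (if (val m < k.-1)%N then (nth 0 X m) (i m) (j m)
      else ((i m == j m) : bool)%:R).

(* f_lambda(X_1..X_{k-1}) = tr_{1..k-1}[ P (X_1 (x) .. (x) X_{k-1} (x) 1) ]:
   partial trace over the first k-1 tensor factors. *)
Definition f_lambda (chi : 'S_k -> C) (X : seq 'M[C]_d) : 'M[C]_d :=
  \matrix_(a, b)
    \sum_(i : idx) \sum_(j : idx)
      (if [&& [forall m : 'I_k, (val m < k.-1)%N ==> (i m == j m)],
              [forall m : 'I_k, (val m == k.-1) ==> (i m == a)] &
              [forall m : 'I_k, (val m == k.-1) ==> (j m == b)]]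
       then \sum_(l : idx) Pyoung chi i l * tensX X l j
       else 0).

End Defs.

(* The central Young projector P_lambda is Hermitian and idempotent, by the
   orthogonality relations of the irreducible character chi_lambda, hence a
   positive semidefinite kernel on the tensor basis.  Factor each X_m as
   B_m^* B_m.  In coordinates, the quadratic form of f_lambda(X) at v is that
   of the entrywise (Schur) product of P_lambda with the Gram kernel of
   B_1 (x) ... (x) B_(k-1), with v absorbed into the last tensor factor; it is
   thus a sum of nonnegative terms w_s P_lambda w_s^*.  Hermiticity follows,
   since a complex matrix with real quadratic form is Hermitian. *)

From HB Require Import structures.
From mathcomp Require Import all_boot all_order all_algebra all_fingroup.
From mathcomp Require Import mxrepresentation sesquilinear spectral.
From mathcomp Require Import complex.
From mathcomp Require Import reals.
From mathcomp Require Import ring.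

Set Implicit Arguments.
Unset Strict Implicit.
Unset Printing Implicit Defensive.

Import Order.TTheory GRing.Theory Num.Theory.
Local Open Scope ring_scope.
Local Open Scope sesquilinear_scope.

Section Kernels.
Variable C : numClosedFieldType.

Definition psd_kernel (I : finType) (Q : I -> I -> C) : Prop :=
  forall w : I -> C, 0 <= \sum_i \sum_j w i * Q i j * (w j)^*.

Definition gram (T I : finType) (g : T -> I -> C) (x y : I) : C :=
  \sum_t g t x * (g t y)^*.

Lemma psd_kernel_hermitian_idem (I : finType) (Q : I -> I -> C) :
  (forall i j, (Q j i)^* = Q i j) -> (forall i j, \sum_l Q i l * Q l j = Q i j) ->
  psd_kernel Q.
Proof.
move=> Qherm Qidem w.
suff -> : \sum_i \sum_j w i * Q i j * (w j)^* =
          \sum_l `|\sum_i w i * Q i l| ^+ 2.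
  by apply: sumr_ge0 => l _; rewrite exprn_ge0.
under [RHS]eq_bigr => l _ do rewrite normCK rmorph_sum big_distrlr /=.
rewrite [RHS]exchange_big; apply: eq_bigr => i _.
rewrite [RHS]exchange_big; apply: eq_bigr => j _.
rewrite -Qidem mulr_sumr mulr_suml; apply: eq_bigr => l _.
by rewrite rmorphM /= Qherm; ring.
Qed.

Lemma psd_kernel_mul_gram (I T : finType) (Q : I -> I -> C) (g : T -> I -> C) :
  psd_kernel Q -> psd_kernel (fun x y => Q x y * gram g x y).
Proof.
move=> Qpsd w.
suff -> : \sum_i \sum_j w i * (Q i j * gram g i j) * (w j)^* =
          \sum_t \sum_i \sum_j (w i * g t i) * Q i j * (w j * g t j)^*.
  by apply: sumr_ge0 => t _; apply: Qpsd.
rewrite [RHS]exchange_big; apply: eq_bigr => i _.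
rewrite [RHS]exchange_big; apply: eq_bigr => j _.
rewrite /gram mulr_sumr mulr_sumr mulr_suml; apply: eq_bigr => t _.
rewrite rmorphM /=; ring.
Qed.

Lemma prod_gram (J T I : finType) (g : J -> T -> I -> C) (x y : {ffun J -> I}) :
  \prod_m gram (g m) (x m) (y m) =
  gram (fun (s : {ffun J -> T}) (z : {ffun J -> I}) => \prod_m g m (s m) (z m)) x y.
Proof.
rewrite /gram bigA_distr_bigA /=; apply: eq_bigr => s _.
by rewrite rmorph_prod -big_split.
Qed.

End Kernels.

Section PsdMatrices.
Variables (C : numClosedFieldType) (n : nat).
Implicit Types (A : 'M[C]_n) (u : 'rV[C]_n).

Lemma form_conj A u :
  ((u *m A *m u ^t*) 0 0)^* = (u *m A ^t* *m u ^t*) 0 0.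
Proof.
rewrite -[in RHS](trmxCK u) -!(map_mxM, trmx_mul) mulmxA.
by rewrite trmxCK !mxE.
Qed.

Lemma form_eq0 A : (forall u, (u *m A *m u ^t*) 0 0 = 0) -> A = 0.
Proof.
move=> A0; pose bf (u w : 'rV[C]_n) := (u *m A *m w ^t*) 0 0.
have bfDl u1 u2 w : bf (u1 + u2) w = bf u1 w + bf u2 w.
  by rewrite /bf !mulmxDl mxE.
have bfDr u w1 w2 : bf u (w1 + w2) = bf u w1 + bf u w2.
  by rewrite /bf linearD /= map_mxD mulmxDr mxE.
have bfZl z u w : bf (z *: u) w = z * bf u w.
  by rewrite /bf -!scalemxAl mxE.
have bfZr z u w : bf u (z *: w) = z^* * bf u w.
  by rewrite /bf linearZ /= map_mxZ -scalemxAr mxE.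
have bfe a b : bf 'e_a 'e_b = A a b.
  rewrite /bf -rowE mxE (bigD1 b) //= big1 ?addr0 => [|j /negbTE nj].
    by rewrite !mxE !eqxx /= rmorph1 mulr1.
  by rewrite !mxE nj rmorph0 mulr0.
apply/matrixP => a b; rewrite mxE.
(* Polarization along e_a + e_b and e_a + i e_b. *)
have := A0 ('e_a + 'e_b); have := A0 ('e_a + 'i *: 'e_b).
rewrite -/(bf _ _) -/(bf _ _) !(bfDl, bfDr, bfZl, bfZr) !bfe.
have := A0 'e_a; have := A0 'e_b; rewrite -/(bf _ _) -/(bf _ _) !bfe.
move=> -> -> /eqP; rewrite conjCi !(add0r, addr0) => /eqP Ei /eqP.
rewrite addr_eq0 => /eqP Eab; move: Ei.
rewrite Eab mulr0 addr0 mulrN mulNr opprK -mulr2n => /eqP.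
by rewrite mulrn_eq0 /= mulf_eq0 (negbTE (neq0Ci _)) => /eqP ->; rewrite oppr0.
Qed.

Lemma form_ge0_hermitian A : (forall u, 0 <= (u *m A *m u ^t*) 0 0) -> A ^t* = A.
Proof.
move=> A_ge0; apply/eqP; rewrite -subr_eq0; apply/eqP/form_eq0 => u.
by rewrite mulmxBr mulmxBl mxE [X in _ + X]mxE -form_conj geC0_conj ?subrr.
Qed.

Definition psd_factor A : 'M[C]_n :=
  diag_mx (map_mx sqrtC (spectral_diag A)) *m spectralmx A.

Lemma psd_spectral_decomposition A :
  psdmx A -> A = (spectralmx A) ^t* *m diag_mx (spectral_diag A) *m spectralmx A.
Proof.
case=> Aherm _; have /orthomx_spectralP {1}-> : A \is normalmx.
  by rewrite hermitian_normalmx // qualifE expr0 scale1r Aherm.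
by rewrite invmx_unitary ?spectral_unitarymx.
Qed.

Lemma psd_spectral_diag_ge0 A s : psdmx A -> 0 <= spectral_diag A 0 s.
Proof.
move=> Apsd; have [_ A_ge0] := Apsd; have := A_ge0 ('e_s *m spectralmx A).
rewrite {2}(psd_spectral_decomposition Apsd) trmx_mul map_mxM !mulmxA.
rewrite !mulmxtVK ?spectral_unitarymx // -rowE row_diag_mx -scalemxAl.
by rewrite trmx_delta map_delta_mx mul_delta_mx !mxE mulr1.
Qed.

Lemma psd_factorK A : psdmx A -> (psd_factor A) ^t* *m psd_factor A = A.
Proof.
move=> Apsd; rewrite [RHS](psd_spectral_decomposition Apsd) /psd_factor.
rewrite trmx_mul map_mxM tr_diag_mx map_diag_mx !mulmxA; congr (_ *m _).
rewrite -!mulmxA; congr (_ *m _); apply/matrixP => i j.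
rewrite mul_diag_mx !mxE; case: eqP => [->|]; last by rewrite !mulr0n mulr0.
by rewrite !mulr1n /= geC0_conj ?sqrtC_ge0 ?psd_spectral_diag_ge0 // -expr2 sqrtCK.
Qed.

Lemma psdmx_gram A x y : psdmx A -> A x y = gram (psd_factor A) y x.
Proof.
move=> /psd_factorK {1}<-; rewrite mxE; apply: eq_bigr => t _.
by rewrite !mxE mulrC.
Qed.

Lemma unitmx_sum_mul_adjoint (I : finType) (F : I -> 'M[C]_n) i0 :
  F i0 \in unitmx -> \sum_i F i *m (F i) ^t* \in unitmx.
Proof.
move=> F_unit; rewrite unitmxE unitfE; apply/det0P => -[v v_neq0 vH0].
have : \sum_i dotmx (v *m F i) (v *m F i) = 0.
  transitivity ((v *m (\sum_i F i *m (F i) ^t*) *m v ^t*) 0 0).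
    rewrite mulmx_sumr mulmx_suml summxE; apply: eq_bigr => i _.
    by rewrite dotmxE trmx_mul map_mxM !mulmxA.
  by rewrite vH0 mul0mx mxE.
move/eqP; rewrite psumr_eq0 => [|i _]; last exact: dnorm_ge0.
move/allP/(_ i0 (mem_index_enum _)).
by rewrite dnorm_eq0 mulmx_free_eq0 ?row_free_unit // (negbTE v_neq0).
Qed.

End PsdMatrices.

Lemma mulmx_delta_mxE (R : pzSemiRingType) m n p
    (A : 'M[R]_(m, n)) (B : 'M[R]_(n, p)) a b c e :
  (A *m delta_mx b c *m B) a e = A a b * B c e.
Proof.
rewrite -(mul_delta_mx (0 : 'I_1)) mulmxA -colE -mulmxA -rowE.
by rewrite mxE big_ord1 !mxE.
Qed.

Section Representation.
Variables (C : numClosedFieldType) (gT : finGroupType) (n : nat).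
Variable rG : mx_representation C [set: gT]%G n.
Hypothesis rG_irr : mx_irreducible rG.

Let rG_mul g h : rG (g * h)%g = rG g *m rG h.
Proof. by rewrite repr_mxM ?inE. Qed.

Lemma trace_reprV g : (\tr (rG g))^* = \tr (rG g^-1%g).
Proof.
(* rG g is unitary for the rG-invariant positive definite form H. *)
pose H := \sum_(h : gT) rG h *m (rG h) ^t*.
have H_unit : H \in unitmx.
  by apply: (unitmx_sum_mul_adjoint (i0 := 1%g)); rewrite repr_mx1 unitmx1.
have rG_adjoint : (rG g) ^t* = invmx H *m rG g^-1%g *m H.
  rewrite -mulmxA; apply: (canRL (mulKmx H_unit)).
  rewrite -[H in RHS](_ : rG g *m H *m (rG g) ^t* = H).
    by rewrite !mulmxA -rG_mul mulVg repr_mx1 mul1mx.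
  rewrite /H mulmx_sumr mulmx_suml [RHS](reindex (mulg g)) /=; last first.
    by exists (mulg g^-1) => h _; rewrite ?mulKg ?mulKVg.
  by apply: eq_bigr => h _; rewrite rG_mul trmx_mul map_mxM !mulmxA.
rewrite -trace_map_mx -mxtrace_tr map_trmx rG_adjoint mxtrace_mulC.
by rewrite mulmxA mulmxV ?mul1mx.
Qed.

Lemma irr_degree_neq0 : (n%:R : C) != 0.
Proof. by case/mx_irrP: rG_irr => n_gt0 _; rewrite pnatr_eq0 -lt0n. Qed.

Lemma sum_repr_coefV_mul a b c e :
  \sum_(g : gT) rG g^-1%g a b * rG g c e =
  #|gT|%:R / n%:R * ((a == e) && (b == c))%:R.
Proof.
(* Schur's lemma: S is a scalar matrix, and its trace determines it. *)
pose S := \sum_(g : gT) rG g^-1%g *m delta_mx b c *m rG g.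
have S_cent : centgmx rG S.
  apply/centgmxP => h _; rewrite mulmx_suml mulmx_sumr.
  rewrite [RHS](reindex (mulg^~ h)) /=; last first.
    by exists (mulg^~ h^-1%g) => g _; rewrite ?mulgK ?mulgKV.
  apply: eq_bigr => g _.
  by rewrite invMg !rG_mul !mulmxA -rG_mul mulgV repr_mx1 mul1mx.
have rG_abs_irr := group_closure_closed_field rG_irr.
have [s S_scalar] := is_scalar_mxP (mx_abs_irr_cent_scalar rG_abs_irr S_cent).
have trS : \tr S = #|gT|%:R * (b == c)%:R.
  rewrite raddf_sum (eq_bigr (fun _ => (b == c)%:R)) ?sumr_const ?mulr_natl //.
  move=> g _ /=.
  rewrite mxtrace_mulC mulmxA -rG_mul mulgV repr_mx1 mul1mx.
  rewrite /mxtrace (bigD1 b) //= big1 => [|i /negbTE]; rewrite mxE ?eqxx ?addr0 //.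
  by move=> ->.
have {}S_scalar : S = (#|gT|%:R / n%:R * (b == c)%:R)%:M.
  rewrite S_scalar; congr (_%:M); apply: (mulIf irr_degree_neq0).
  by rewrite mulrAC divfK ?irr_degree_neq0 // -trS S_scalar mxtrace_scalar mulr_natr.
transitivity (S a e).
  by rewrite summxE; apply: eq_bigr => g _; rewrite mulmx_delta_mxE.
by rewrite S_scalar mxE; case: (a == e); case: (b == c); rewrite ?mulr0 ?mulr1.
Qed.

Lemma sum_trace_reprV_scale :
  \sum_(g : gT) \tr (rG g^-1%g) *: rG g = (#|gT|%:R / n%:R)%:M.
Proof.
apply/matrixP => c e; rewrite summxE.
under eq_bigr do rewrite mxE /mxtrace mulr_suml.
rewrite exchange_big /=.
under eq_bigr do rewrite sum_repr_coefV_mul.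
rewrite (bigD1 e) //= big1 => [|a /negbTE nae]; last by rewrite nae mulr0.
by rewrite !mxE eqxx addr0 eq_sym /= mulr_natr.
Qed.

Lemma sum_trace_reprV_mul y :
  \sum_(g : gT) \tr (rG g^-1%g) * \tr (rG (g * y)%g) = #|gT|%:R / n%:R * \tr (rG y).
Proof.
under eq_bigr do rewrite rG_mul -mxtraceZ scalemxAl.
by rewrite -raddf_sum -mulmx_suml sum_trace_reprV_scale /= mul_scalar_mx mxtraceZ.
Qed.

End Representation.

Section YoungProjector.
Variables (C : numClosedFieldType) (k d : nat) (chi : 'S_k -> C).
Hypothesis chi_conj : forall p, (chi p)^* = chi p^-1%g.
Hypothesis chi_convolution : forall y,
  \sum_(g : 'S_k) chi g^-1%g * chi (g * y)%g = (k`!)%:R / chi 1%g * chi y.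
Hypothesis chi1_neq0 : chi 1%g != 0.

Definition idx_perm (i : idx k d) (p : 'S_k) : idx k d := [ffun m => i (p m)].

Lemma idx_permM i p q : idx_perm (idx_perm i p) q = idx_perm i (q * p)%g.
Proof. by apply/ffunP => m; rewrite !ffunE permM. Qed.

Lemma idx_permV i l p : (i == idx_perm l p) = (l == idx_perm i p^-1%g).
Proof.
by apply/eqP/eqP => ->; apply/ffunP => m; rewrite !ffunE ?permKV ?permK.
Qed.

Lemma TpermE p i l : Tperm C p i l = (l == idx_perm i p)%:R.
Proof.
congr (nat_of_bool _)%:R.
apply/forallP/eqP => [il | -> m]; last by rewrite ffunE permKV.
by apply/ffunP => m; rewrite ffunE; move/eqP: (il (p m)); rewrite permK.
Qed.

Local Notation P := (@Pyoung C k d chi).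

Let c : C := chi 1%g / (k`!)%:R.

Lemma PyoungE i j :
  P i j = c * \sum_(p : 'S_k) chi p^-1%g * (j == idx_perm i p)%:R.
Proof. by congr (_ * _); apply: eq_bigr => p _; rewrite TpermE. Qed.

Lemma sum_Pyoung_mul i (F : idx k d -> C) :
  \sum_l P i l * F l = c * \sum_(p : 'S_k) chi p^-1%g * F (idx_perm i p).
Proof.
under eq_bigr => l _ do rewrite PyoungE -mulrA mulr_suml.
rewrite -mulr_sumr exchange_big /=; congr (_ * _); apply: eq_bigr => p _.
rewrite (bigD1 (idx_perm i p)) //= big1 ?addr0 => [|l /negbTE ->].
  by rewrite eqxx mulr1.
by rewrite mulr0 mul0r.
Qed.

Lemma Pyoung_idem i j : \sum_l P i l * P l j = P i j.
Proof.
have c_convolution : c * ((k`!)%:R / chi 1%g) = 1.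
  by rewrite mulrA divfK ?mulfV // pnatr_eq0 -lt0n fact_gt0.
rewrite sum_Pyoung_mul.
transitivity (c * \sum_(p : 'S_k) c * \sum_(x : 'S_k)
                   chi p^-1%g * chi (p * x^-1)%g * (j == idx_perm i x)%:R).
  congr (_ * _); apply: eq_bigr => p _; rewrite PyoungE mulrCA mulr_sumr.
  congr (_ * _); rewrite (reindex (mulg^~ p^-1%g)) /=; last first.
    by exists (mulg^~ p) => x _; rewrite ?mulgK ?mulgKV.
  by apply: eq_bigr => x _; rewrite idx_permM mulgKV invMg invgK mulrA.
rewrite -mulr_sumr exchange_big /=.
under eq_bigr do rewrite -mulr_suml chi_convolution -(mulrA (_ / _)).
by rewrite -mulr_sumr [c * (_ * \sum_(_ : 'S_k) _)]mulrA c_convolution mul1r PyoungE.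
Qed.

Lemma Pyoung_hermitian i l : (P l i)^* = P i l.
Proof.
have c_real : c^* = c by rewrite rmorphM fmorphV rmorph_nat /= chi_conj invg1.
rewrite !PyoungE rmorphM /= c_real rmorph_sum; congr (_ * _).
rewrite (reindex invg) /=; last by exists invg => p _; rewrite invgK.
by apply: eq_bigr => p _; rewrite rmorphM rmorph_nat /= chi_conj idx_permV !invgK.
Qed.

Lemma Pyoung_psd : psd_kernel P.
Proof. exact: psd_kernel_hermitian_idem Pyoung_hermitian Pyoung_idem. Qed.

End YoungProjector.

Section PartialTrace.
Variables (C : numClosedFieldType) (k d : nat) (chi : 'S_k -> C) (X : seq 'M[C]_d).
Hypothesis k_gt0 : (0 < k)%N.

Local Notation P := (@Pyoung C k d chi).

Let last_lt : (k.-1 < k)%N. Proof. by rewrite ltn_predL. Qed.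
Let last : 'I_k := Ordinal last_lt.

Let lt_last (m : 'I_k) : (val m < k.-1)%N = (m != last).
Proof. by rewrite ltn_neqAle -ltnS prednK // ltn_ord andbT. Qed.

Let set_last (i : idx k d) (b : 'I_d) : idx k d :=
  [ffun m => if m == last then b else i m].

Let tens_kernel (i l : idx k d) : C :=
  \prod_(m : 'I_k) (if (val m < k.-1)%N then nth 0 X m (l m) (i m) else 1).

Lemma f_lambda_cond (i j : idx k d) a b :
  [&& [forall m : 'I_k, (val m < k.-1)%N ==> (i m == j m)],
      [forall m : 'I_k, (val m == k.-1) ==> (i m == a)] &
      [forall m : 'I_k, (val m == k.-1) ==> (j m == b)]] =
  (i last == a) && (j == set_last i b).
Proof.
have forall_last (x : idx k d) t :
    [forall m : 'I_k, (val m == k.-1) ==> (x m == t)] = (x last == t).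
  apply/forallP/idP => [/(_ last)/implyP-> // | /eqP <- m].
  apply/implyP => /eqP m_last.
  by rewrite (_ : m = last) //; apply: val_inj.
rewrite !forall_last andbCA; congr (_ && _).
apply/andP/eqP => [[/forallP ij /eqP <-] | ->]; last first.
  rewrite !ffunE eqxx; split=> //; apply/forallP => m.
  by rewrite ffunE lt_last; case: eqP => //=.
apply/ffunP => m; rewrite ffunE; case: eqP => [-> // | /eqP m_last].
by apply/esym/eqP; apply: (implyP (ij m)); rewrite lt_last.
Qed.

Lemma tensX_set_last (i l : idx k d) b :
  tensX X l (set_last i b) = tens_kernel i l * (l last == b)%:R.
Proof.
rewrite /tensX /tens_kernel (bigD1 last) // [in RHS](bigD1 last) //=.
rewrite !ltnn ffunE eqxx mul1r mulrC; congr (_ * _).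
by apply: eq_bigr => m m_last; rewrite lt_last m_last ffunE (negbTE m_last).
Qed.

Lemma f_lambdaE :
  f_lambda chi X =
  \sum_i \sum_l (P i l * tens_kernel i l) *: delta_mx (i last) (l last).
Proof.
apply/matrixP => a b; rewrite !mxE summxE; apply: eq_bigr => i _.
rewrite summxE; under eq_bigr => j _ do rewrite f_lambda_cond.
have [<- | /negbTE ia] := eqVneq (i last) a; last first.
  by rewrite !big1 // => l _; rewrite !mxE eq_sym ia mulr0.
rewrite -big_mkcond big_pred1_eq; apply: eq_bigr => l _.
by rewrite tensX_set_last !mxE eqxx eq_sym mulrA.
Qed.

Hypothesis d_gt0 : (0 < d)%N.
Hypothesis X_psd : forall m, (m < k.-1)%N -> psdmx (nth 0 X m).
Hypothesis P_psd : psd_kernel P.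

Let t0 : 'I_d := Ordinal d_gt0.

(* The identity on the last factor is the Gram kernel of the indicator of t0. *)
Let tens_factor (m : 'I_k) (t x : 'I_d) : C :=
  if (val m < k.-1)%N then psd_factor (nth 0 X m) t x else (t == t0)%:R.

Let tens_root (s : {ffun 'I_k -> 'I_d}) (x : idx k d) : C :=
  \prod_m tens_factor m (s m) (x m).

Lemma tens_kernel_gram i l : tens_kernel i l = gram tens_root i l.
Proof.
rewrite -prod_gram; apply: eq_bigr => m _.
rewrite /tens_factor; case: ifP => m_lt; first exact: psdmx_gram (X_psd m_lt).
rewrite /gram (bigD1 t0) //= big1 => [|t /negbTE ->]; last by rewrite mul0r.
by rewrite mul1r conjC1 addr0.
Qed.

Lemma f_lambda_form_ge0 (v : 'rV[C]_d) : 0 <= (v *m f_lambda chi X *m v ^t*) 0 0.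
Proof.
have := psd_kernel_mul_gram tens_root P_psd (fun i => v 0 (i last)).
congr (0 <= _); rewrite f_lambdaE mulmx_sumr mulmx_suml summxE.
apply: eq_bigr => i _; rewrite mulmx_sumr mulmx_suml summxE; apply: eq_bigr => l _.
by rewrite -scalemxAr -scalemxAl mxE mulmx_delta_mxE !mxE tens_kernel_gram; ring.
Qed.

Lemma psdmx_f_lambda : psdmx (f_lambda chi X).
Proof. by split; [apply: form_ge0_hermitian |]; apply: f_lambda_form_ge0. Qed.

End PartialTrace.

Theorem theorem3 (R : realType) (k d : nat) :
  (2 <= k)%N -> (1 <= d)%N ->
  forall chi : 'S_k -> R[i], is_irr_char chi ->
  forall X : (k.-1).-tuple 'M[R[i]]_d,
    (forall l : 'I_k.-1, psdmx (tnth X l)) ->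
    psdmx (f_lambda chi X).
Proof.
move=> k_ge2 d_gt0 chi [n [rG [rG_irr chiE]]] X X_psd.
have chi1 : chi 1%g = n%:R by rewrite chiE repr_mx1 mxtrace1.
have chi_conj p : (chi p)^* = chi p^-1%g by rewrite !chiE trace_reprV.
have chi_convolution y :
    \sum_(g : 'S_k) chi g^-1%g * chi (g * y)%g = (k`!)%:R / chi 1%g * chi y.
  under eq_bigr do rewrite !chiE.
  by rewrite sum_trace_reprV_mul // card_Sn chi1 chiE.
have chi1_neq0 : chi 1%g != 0 by rewrite chi1 (irr_degree_neq0 rG_irr).
apply: psdmx_f_lambda => [|//|m m_lt|]; first exact: ltnW.
  by rewrite -(tnth_nth 0 X (Ordinal m_lt)).
exact: Pyoung_psd.
Qed.
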